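(* Let $h>0$, $n\in\mathbb{N}$, and let $\lambda:\mathbb{T}\to\mathbb{R}$ be an $n$-cycle with values $\lambda_0,\dots,\lambda_{n-1}\in\mathbb{R}\setminus\{\pm\tfrac1h\}$, such that $0<|e_{\lambda}(nh)|\neq1$ and $0<|e_{-\lambda}(nh)|\neq1$. Define for $t\in\mathbb{T}$ $$p(t)=\lambda(t+2h),\quad q(t)=\Delta_h\lambda(t+h)-\lambda(t+h)\lambda(t+2h),$$ $$r(t)=\Delta_h^2\lambda(t)-\lambda(t)\Delta_h\lambda(t+h)-\lambda(t)\lambda(t+h)\lambda(t+2h).$$ Then the third-order equation $$\Delta_h^3y(t)+p(t)\Delta_h^2y(t)+q(t)\Delta_h y(t)+r(t)y(t)=0,\qquad t\in\mathbb{T},$$ has Hyers–Ulam stability on $\mathbb{T}$ with Hyers–Ulam stability constant $K=K_0(\lambda)\bigl(K_0(-\lambda)\bigr)^2$.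
   Context: Fix $h>0$ and let $\mathbb{T}=\{0,h,2h,3h,\dots\}$. For $x:\mathbb{T}\to\mathbb{R}$, $\Delta_h x(t)=\frac{x(t+h)-x(t)}{h}$ and $\Delta_h^2x=\Delta_h(\Delta_h x)$, $\Delta_h^3x=\Delta_h(\Delta_h^2 x)$. An $n$-cycle is a function $\mu:\mathbb{T}\to\mathbb{R}$ with $\mu(t)=\mu_k$ whenever $t/h\equiv k\pmod n$, $k\in\{0,\dots,n-1\}$, which has period $n$ and no smaller period. For such $\mu$ define the discrete exponential $e_\mu(t)=\prod_{k=0}^{t/h-1}(1+h\mu(kh))$ (empty product $=1$), so $e_\mu(nh)=\prod_{k=0}^{n-1}(1+h\mu_k)$. For $k\in\{0,\dots,n-1\}$ define $$S_k(\mu)=\sum_{j=1}^{n}\prod_{i=0}^{j-1}\frac{1}{|1+h\mu_{(k+i)\bmod n}|},$$ (e.g. $S_0(\mu)=\frac{1}{|1+h\mu_0|}+\frac{1}{|1+h\mu_0||1+h\mu_1|}+\dots+\frac{1}{|1+h\mu_0|\cdots|1+h\mu_{n-1}|}$), and, when $0<|e_\mu(nh)|\neq1$, $$K_0(\mu)=\frac{h|e_\mu(nh)|}{\bigl|1-|e_\mu(nh)|\bigr|}\max\{S_0(\mu),\dots,S_{n-1}(\mu)\}.$$ Here $-\lambda$ denotes the $n$-cycle with values $-\lambda_0,\dots,-\lambda_{n-1}$. Hyers–Ulam stability: an equation $\mathcal{L}[y](t)=f(t)$, $t\in\mathbb{T}$ (with $\mathcal{L}$ a linear difference operator) has Hyers–Ulam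 stability on $\mathbb{T}$ with Hyers–Ulam stability constant $K>0$ if for every $\varepsilon>0$ and every $\xi:\mathbb{T}\to\mathbb{R}$ with $|\mathcal{L}[\xi](t)-f(t)|\le\varepsilon$ for all $t\in\mathbb{T}$, there is a solution $y:\mathbb{T}\to\mathbb{R}$ of the equation with $|\xi(t)-y(t)|\le K\varepsilon$ for all $t\in\mathbb{T}$. The minimum Hyers–Ulam stability constant is the smallest such $K$. *)

(* concrete reals R. Time scale T = {0,h,2h,...} is indexed by
   k : nat, with t = k*h; a function x : T -> R is a function nat -> R. *)
From Stdlib Require Import Reals Lra List.
Open Scope R_scope.

Definition Dh (h : R) (x : nat -> R) : nat -> R :=
  fun k => (x (S k) - x k) / h.

Definition ncycle (n : nat) (mu : nat -> R) : Prop :=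
  (0 < n)%nat /\
  (forall k, mu (k + n)%nat = mu k) /\
  (forall m, (0 < m)%nat -> (m < n)%nat -> ~ (forall k, mu (k + m)%nat = mu k)).

Fixpoint dexp (h : R) (mu : nat -> R) (m : nat) : R :=
  match m with
  | O => 1
  | S m' => dexp h mu m' * (1 + h * mu m')
  end.

Fixpoint Sprod (h : R) (n : nat) (mu : nat -> R) (k j : nat) : R :=
  match j with
  | O => 1
  | S j' => Sprod h n mu k j' * / Rabs (1 + h * mu (Nat.modulo (k + j') n))
  end.

Definition Sk (h : R) (n : nat) (mu : nat -> R) (k : nat) : R :=
  fold_right Rplus 0 (map (fun j => Sprod h n mu k j) (seq 1 n)).

(* max{S_0, ..., S_{n-1}} (all S_k are positive, so starting the fold at 0
   is harmless for n >= 1) *)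
Definition Smax (h : R) (n : nat) (mu : nat -> R) : R :=
  fold_right Rmax 0 (map (fun k => Sk h n mu k) (seq 0 n)).

Definition K0 (h : R) (n : nat) (mu : nat -> R) : R :=
  h * Rabs (dexp h mu n) / Rabs (1 - Rabs (dexp h mu n)) * Smax h n mu.

Definition HUS (L : (nat -> R) -> nat -> R) (f : nat -> R) (K : R) : Prop :=
  0 < K /\
  forall eps : R, 0 < eps ->
  forall xi : nat -> R,
    (forall k, Rabs (L xi k - f k) <= eps) ->
    exists y : nat -> R,
      (forall k, L y k = f k) /\
      (forall k, Rabs (xi k - y k) <= K * eps).

From Stdlib Require Import Reals Lra Lia List Arith FunctionalExtensionality.
Open Scope R_scope.

(* The operator factors as L = F_{-lam(.+2)} o F_{lam(.+1)} o F_{-lam}, where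
   F_mu x = Dh x - mu x is a first-order operator (lemma [factorization]).
   The core is the Hyers-Ulam stability of F_mu for an n-periodic mu with
   |e_mu(nh)| <> 1 and constant K0(mu) ([fo_stable], [fo_stable_K0]): writing
   z = x - d, this reduces to finding a bounded solution d of
   d(k+1) = a_k d_k + f_k with a = 1 + h mu and |f| <= h eps.  With
   rho = |a_0 ... a_{n-1}|, for rho < 1 the solution starting at 0 is bounded
   ([contracting_solution]); for rho > 1 the variation-of-constants formula
   with the tail of a convergent series gives one ([expanding_solution]).  Applying the first-order result three times,
   from the outermost factor inwards, yields the constant
   K0(lam) K0(-lam)^2. *)

Fixpoint cprod (a : nat -> R) (k m : nat) : R :=
  match m with O => 1 | S m' => cprod a k m' * a (k + m')%nat end.

(* rsum a k m = sum_{j=1}^{m} 1/|cprod a k j|; for a = 1 + h mu, rsum a k n is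
   S_{k mod n}(mu). *)
Fixpoint rsum (a : nat -> R) (k m : nat) : R :=
  match m with O => 0 | S m' => rsum a k m' + / Rabs (cprod a k (S m')) end.

(* wsum a k m = sum_{j<m} |a(k+j+1) ... a(k+m-1)|: the amplification of the
   forward solution of d(i+1) = a_i d_i + e_i on [k, k+m). *)
Fixpoint wsum (a : nat -> R) (k m : nat) : R :=
  match m with O => 0 | S m' => Rabs (a (k + m')%nat) * wsum a k m' + 1 end.

Section Products.
Variable a : nat -> R.

Lemma cprod_add k m1 m2 : cprod a k (m1 + m2) = cprod a k m1 * cprod a (k + m1) m2.
Proof.
  induction m2 as [|m2 IH]; simpl.
  - rewrite Nat.add_0_r; ring.
  - rewrite Nat.add_succ_r; simpl; rewrite IH.
    replace (k + (m1 + m2))%nat with (k + m1 + m2)%nat by lia; ring.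
Qed.

Lemma wsum_add k m1 m2 :
  wsum a k (m1 + m2) = Rabs (cprod a (k + m1) m2) * wsum a k m1 + wsum a (k + m1) m2.
Proof.
  induction m2 as [|m2 IH]; simpl.
  - rewrite Nat.add_0_r, Rabs_R1; ring.
  - rewrite Nat.add_succ_r; simpl; rewrite IH, Rabs_mult.
    replace (k + (m1 + m2))%nat with (k + m1 + m2)%nat by lia; ring.
Qed.

Lemma wsum_nonneg k m : 0 <= wsum a k m.
Proof.
  induction m; simpl; [lra|].
  assert (0 <= Rabs (a (k + m)%nat)) by apply Rabs_pos. nra.
Qed.

Hypothesis a_nz : forall j, a j <> 0.

Lemma cprod_nz k m : cprod a k m <> 0.
Proof. induction m; simpl; [lra|]. apply Rmult_integral_contrapositive; auto. Qed.

Lemma inv_abs_cprod_pos k m : 0 < / Rabs (cprod a k m).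
Proof. apply Rinv_0_lt_compat, Rabs_pos_lt, cprod_nz. Qed.

Lemma rsum_add k m1 m2 :
  rsum a k (m1 + m2) = rsum a k m1 + / Rabs (cprod a k m1) * rsum a (k + m1) m2.
Proof.
  induction m2 as [|m2 IH]; simpl.
  - rewrite Nat.add_0_r; ring.
  - rewrite Nat.add_succ_r; simpl; rewrite IH.
    change (cprod a k (m1 + m2) * a (k + (m1 + m2))%nat) with (cprod a k (S (m1 + m2))).
    rewrite <- Nat.add_succ_r, cprod_add, Rabs_mult, Rinv_mult; simpl; ring.
Qed.

Lemma rsum_mono k m d : rsum a k m <= rsum a k (m + d).
Proof.
  induction d; [rewrite Nat.add_0_r; lra|].
  rewrite Nat.add_succ_r; simpl.
  pose proof (inv_abs_cprod_pos k (S (m + d))); simpl in *; lra.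
Qed.

Lemma rsum_nonneg k m : 0 <= rsum a k m.
Proof. exact (rsum_mono k 0 m). Qed.

Lemma wsum_rsum k m : wsum a k m = Rabs (cprod a k m) * rsum a k m.
Proof.
  induction m; simpl; [ring|]. rewrite IHm, Rabs_mult.
  pose proof (cprod_nz k m); pose proof (a_nz (k + m)).
  field; split; apply Rabs_no_R0; auto.
Qed.

End Products.

Lemma cprod_shift a s k m : cprod (fun j => a (j + s)%nat) k m = cprod a (k + s) m.
Proof. induction m; simpl; auto. rewrite IHm. do 2 f_equal. lia. Qed.

Lemma rsum_shift a s k m : rsum (fun j => a (j + s)%nat) k m = rsum a (k + s) m.
Proof.
  induction m; auto.
  change (rsum (fun j => a (j + s)%nat) k m + / Rabs (cprod (fun j => a (j + s)%nat) k (S m))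
          = rsum a (k + s) m + / Rabs (cprod a (k + s) (S m))).
  rewrite IHm, cprod_shift; reflexivity.
Qed.

Section Periodic.
Variables (a : nat -> R) (n : nat).
Hypothesis a_per : forall k, a (k + n)%nat = a k.

Lemma cprod_per k m : cprod a (k + n) m = cprod a k m.
Proof.
  induction m; simpl; auto. rewrite IHm.
  replace (k + n + m)%nat with (k + m + n)%nat by lia. rewrite a_per; auto.
Qed.

Lemma wsum_per k m : wsum a (k + n) m = wsum a k m.
Proof.
  induction m; simpl; auto. rewrite IHm.
  replace (k + n + m)%nat with (k + m + n)%nat by lia. rewrite a_per; auto.
Qed.

Hypotheses (n_pos : (0 < n)%nat) (a_nz : forall j, a j <> 0).

Lemma cprod_period k : cprod a k n = cprod a 0 n.
Proof.
  pose proof (cprod_add a 0 k n) as E1. pose proof (cprod_add a 0 n k) as E2.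
  rewrite Nat.add_comm, E1 in E2. pose proof (cprod_per 0 k) as E3; simpl in *.
  rewrite E3 in E2. apply (Rmult_eq_reg_l (cprod a 0 k)); [lra|apply cprod_nz; auto].
Qed.

Variable M : R.
Hypothesis rsum_le : forall k, rsum a k n <= M.

Lemma M_nonneg : 0 <= M.
Proof. eapply Rle_trans; [apply (rsum_nonneg a a_nz 0 n)|apply rsum_le]. Qed.

(* rho < 1: the forward weights stay below rho/(1-rho) M, since one more period
   multiplies them by rho and adds at most rho M. *)
Lemma wsum_bound : Rabs (cprod a 0 n) < 1 ->
  forall k, wsum a 0 k <= Rabs (cprod a 0 n) / (1 - Rabs (cprod a 0 n)) * M.
Proof.
  intros Hr. set (rho := Rabs (cprod a 0 n)) in *.
  assert (Hrho : 0 <= rho) by apply Rabs_pos.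
  pose proof M_nonneg as HM0.
  assert (Hk : forall k, Rabs (cprod a k n) = rho)
    by (intros; unfold rho; rewrite cprod_period; auto).
  assert (Hper : forall k, rho * rsum a k n <= rho * M)
    by (intros; apply Rmult_le_compat_l; auto).
  assert (Hgeom : rho * M <= rho / (1 - rho) * M).
  { assert (1 <= / (1 - rho)) by (rewrite <- Rinv_1 at 1; apply Rinv_le_contravar; lra).
    unfold Rdiv; rewrite Rmult_assoc, (Rmult_comm (/ _)), <- Rmult_assoc.
    assert (0 <= rho * M) by nra. nra. }
  intros k; induction k as [k IH] using (well_founded_induction lt_wf).
  destruct (Nat.lt_ge_cases k n) as [Hlt|Hge].
  - (* wsum a 0 k = wsum a n k is the tail of wsum a k n = rho rsum a k n *)
    rewrite <- (wsum_per 0 k); simpl.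
    pose proof (wsum_add a k (n - k) k) as E.
    replace (n - k + k)%nat with n in E by lia.
    replace (k + (n - k))%nat with n in E by lia.
    rewrite wsum_rsum, Hk in E by auto.
    pose proof (Hper k).
    assert (0 <= Rabs (cprod a n k) * wsum a k (n - k))
      by (apply Rmult_le_pos; [apply Rabs_pos|apply wsum_nonneg]).
    lra.
  - destruct (Nat.le_exists_sub n k Hge) as [k' [-> _]].
    rewrite wsum_add; simpl. rewrite (wsum_rsum a a_nz k' n), !Hk.
    assert (wsum a 0 k' <= rho / (1 - rho) * M) by (apply IH; lia).
    pose proof (Hper k').
    assert (rho * wsum a 0 k' <= rho * (rho / (1 - rho) * M))
      by (apply Rmult_le_compat_l; auto).
    assert (rho * (rho / (1 - rho) * M) + rho * M = rho / (1 - rho) * M) by (field; lra).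
    lra.
Qed.

(* rho > 1: the reciprocal sums over arbitrarily long windows stay below
   rho/(rho-1) M, since each further period contributes a factor 1/rho. *)
Lemma rsum_bound : 1 < Rabs (cprod a 0 n) ->
  forall m k, rsum a k m <= Rabs (cprod a 0 n) / (Rabs (cprod a 0 n) - 1) * M.
Proof.
  intros Hr. set (rho := Rabs (cprod a 0 n)) in *.
  pose proof M_nonneg as HM0.
  assert (Hk : forall k, Rabs (cprod a k n) = rho)
    by (intros; unfold rho; rewrite cprod_period; auto).
  assert (Hgeom : M <= rho / (rho - 1) * M).
  { assert (1 <= rho / (rho - 1)).
    { apply (Rmult_le_reg_r (rho - 1)); [lra|].
      unfold Rdiv; rewrite Rmult_assoc, Rinv_l; lra. }
    nra. }
  intros m; induction m as [m IH] using (well_founded_induction lt_wf); intros k.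
  destruct (Nat.lt_ge_cases m n) as [Hlt|Hge].
  - pose proof (rsum_mono a a_nz k m (n - m)) as Hmono.
    replace (m + (n - m))%nat with n in Hmono by lia.
    pose proof (rsum_le k). lra.
  - destruct (Nat.le_exists_sub n m Hge) as [m' [-> _]].
    rewrite Nat.add_comm, rsum_add, Hk by auto.
    assert (rsum a (k + n) m' <= rho / (rho - 1) * M) by (apply IH; lia).
    assert (/ rho * rsum a (k + n) m' <= / rho * (rho / (rho - 1) * M))
      by (apply Rmult_le_compat_l; auto; apply Rlt_le, Rinv_0_lt_compat; lra).
    assert (M + / rho * (rho / (rho - 1) * M) = rho / (rho - 1) * M) by (field; lra).
    pose proof (rsum_le k). lra.
Qed.

End Periodic.

Fixpoint psum (c : nat -> R) (m : nat) : R :=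
  match m with O => 0 | S m' => psum c m' + c m' end.

(* Link with the library's partial sums (which include the last index). *)
Lemma psum_sum_f_R0 c m : psum c (S m) = sum_f_R0 c m.
Proof. induction m; simpl in *; [ring|]. rewrite <- IHm; reflexivity. Qed.

Lemma psum_abs_diff c p r :
  Rabs (psum c (p + r) - psum c p) <=
  psum (fun j => Rabs (c j)) (p + r) - psum (fun j => Rabs (c j)) p.
Proof.
  induction r.
  - rewrite Nat.add_0_r, !Rminus_diag, Rabs_R0; lra.
  - rewrite Nat.add_succ_r; simpl.
    replace (psum c (p + r) + c (p + r)%nat - psum c p)
      with ((psum c (p + r) - psum c p) + c (p + r)%nat) by ring.
    eapply Rle_trans; [apply Rabs_triang|lra].
Qed.

Lemma psum_cv c B : (forall m, psum (fun j => Rabs (c j)) m <= B) ->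
  {l | Un_cv (psum c) l}.
Proof.
  intros HB.
  assert (Habs : {l | Un_cv (sum_f_R0 (fun j => Rabs (c j))) l}).
  { apply growing_cv.
    - intros m; simpl. pose proof (Rabs_pos (c (S m))); lra.
    - exists B. intros x [m ->]. rewrite <- psum_sum_f_R0. apply HB. }
  destruct (cv_cauchy_2 c (cauchy_abs c (cv_cauchy_1 _ Habs))) as [l Hl].
  exists l. apply (CV_shift _ 1). eapply Un_cv_ext; [|exact Hl].
  intros m. rewrite Nat.add_1_r, psum_sum_f_R0; reflexivity.
Qed.

Lemma lim_dist_le u l k x B : Un_cv u l ->
  (forall m, Rabs (u (k + m)%nat - x) <= B) -> Rabs (l - x) <= B.
Proof.
  intros Hu HB. destruct (Rle_lt_dec (Rabs (l - x)) B) as [H|H]; auto. exfalso.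
  destruct (Hu (Rabs (l - x) - B) ltac:(lra)) as [N HN].
  specialize (HN (k + N)%nat ltac:(lia)). specialize (HB N). unfold Rdist in HN.
  assert (Rabs (l - x) <= Rabs (l - u (k + N)%nat) + Rabs (u (k + N)%nat - x)).
  { replace (l - x) with ((l - u (k + N)%nat) + (u (k + N)%nat - x)) by ring.
    apply Rabs_triang. }
  rewrite Rabs_minus_sym in HN. lra.
Qed.

Fixpoint fwd_sol (a f : nat -> R) (k : nat) : R :=
  match k with O => 0 | S k' => a k' * fwd_sol a f k' + f k' end.

(* Coefficients of the variation-of-constants formula
   d_k = cprod a 0 k * (d_0 + sum_{j<k} vc_coef a f j). *)
Definition vc_coef (a f : nat -> R) (j : nat) : R := f j / cprod a 0 (S j).

Section BoundedSolution.
Variables (a f : nat -> R) (n : nat) (M delta : R).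
Hypotheses (n_pos : (0 < n)%nat) (a_nz : forall j, a j <> 0)
  (a_per : forall k, a (k + n)%nat = a k) (rsum_le : forall k, rsum a k n <= M)
  (f_le : forall k, Rabs (f k) <= delta).

Lemma delta_nonneg : 0 <= delta.
Proof. eapply Rle_trans; [apply Rabs_pos|apply (f_le 0)]. Qed.

Lemma fwd_sol_bound k : Rabs (fwd_sol a f k) <= delta * wsum a 0 k.
Proof.
  induction k; simpl; [rewrite Rabs_R0; lra|].
  eapply Rle_trans; [apply Rabs_triang|]. rewrite Rabs_mult.
  assert (Rabs (a k) * Rabs (fwd_sol a f k) <= Rabs (a k) * (delta * wsum a 0 k))
    by (apply Rmult_le_compat_l; auto; apply Rabs_pos).
  pose proof (f_le k). nra.
Qed.

Lemma contracting_solution : Rabs (cprod a 0 n) < 1 ->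
  exists d, (forall k, d (S k) = a k * d k + f k) /\
    (forall k, Rabs (d k) <= Rabs (cprod a 0 n) / (1 - Rabs (cprod a 0 n)) * M * delta).
Proof.
  intros Hr. exists (fwd_sol a f). split; [reflexivity|]. intros k.
  eapply Rle_trans; [apply fwd_sol_bound|].
  pose proof (wsum_bound a n a_per n_pos a_nz M rsum_le Hr k).
  pose proof delta_nonneg. rewrite (Rmult_comm _ delta).
  apply Rmult_le_compat_l; auto.
Qed.

Lemma vc_tail_bound k m :
  Rabs (cprod a 0 k) * (psum (fun j => Rabs (vc_coef a f j)) (k + m)
                        - psum (fun j => Rabs (vc_coef a f j)) k) <= delta * rsum a k m.
Proof.
  induction m.
  - rewrite Nat.add_0_r, Rminus_diag; simpl; lra.
  - rewrite Nat.add_succ_r; simpl.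
    assert (E : cprod a 0 (S (k + m)) = cprod a 0 k * cprod a k (S m))
      by (rewrite <- Nat.add_succ_r, cprod_add; reflexivity).
    assert (Hk : 0 < Rabs (cprod a 0 k)) by (apply Rabs_pos_lt, cprod_nz; auto).
    assert (Hkm : 0 < Rabs (cprod a k (S m))) by (apply Rabs_pos_lt, cprod_nz; auto).
    assert (Rabs (cprod a 0 k) * Rabs (vc_coef a f (k + m)) <= delta * / Rabs (cprod a k (S m))).
    { unfold vc_coef, Rdiv. rewrite E, Rabs_mult, Rabs_inv, Rabs_mult.
      apply (Rmult_le_reg_r (Rabs (cprod a k (S m)))); auto.
      rewrite (Rmult_assoc delta), Rinv_l, Rmult_1_r by lra. pose proof (f_le (k + m)).
      replace (Rabs (cprod a 0 k) * (Rabs (f (k + m)%nat)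
               * / (Rabs (cprod a 0 k) * Rabs (cprod a k (S m)))) * Rabs (cprod a k (S m)))
        with (Rabs (f (k + m)%nat)) by (field; lra). lra. }
    simpl in *. nra.
Qed.

(* rho > 1: the solution d_k = - cprod a 0 k * sum_{j >= k} vc_coef a f j,
   defined through a convergent series, is bounded. *)
Lemma expanding_solution : 1 < Rabs (cprod a 0 n) ->
  exists d, (forall k, d (S k) = a k * d k + f k) /\
    (forall k, Rabs (d k) <= Rabs (cprod a 0 n) / (Rabs (cprod a 0 n) - 1) * M * delta).
Proof.
  intros Hr. set (rho := Rabs (cprod a 0 n)) in *.
  set (B := rho / (rho - 1) * M).
  pose proof delta_nonneg as Hdelta.
  assert (HB : forall m k, delta * rsum a k m <= delta * B)
    by (intros; apply Rmult_le_compat_l; auto; apply rsum_bound; auto).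
  assert (Hsum : forall m, psum (fun j => Rabs (vc_coef a f j)) m <= delta * B).
  { intros m. pose proof (vc_tail_bound 0 m) as H. simpl in H.
    rewrite Rabs_R1 in H. pose proof (HB m 0%nat). lra. }
  destruct (psum_cv (vc_coef a f) (delta * B) Hsum) as [L HL].
  exists (fun k => - cprod a 0 k * (L - psum (vc_coef a f) k)). split.
  - intros k. simpl. unfold vc_coef; simpl.
    pose proof (cprod_nz a a_nz 0 k). pose proof (a_nz k). field; auto.
  - intros k.
    assert (Hk : 0 < Rabs (cprod a 0 k)) by (apply Rabs_pos_lt, cprod_nz; auto).
    assert (Hdist : forall m, Rabs (psum (vc_coef a f) (k + m) - psum (vc_coef a f) k) <= delta * B / Rabs (cprod a 0 k)).
    { intros m. apply (Rmult_le_reg_l (Rabs (cprod a 0 k))); auto.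
      replace (Rabs (cprod a 0 k) * (delta * B / Rabs (cprod a 0 k))) with (delta * B)
        by (field; lra).
      eapply Rle_trans; [apply Rmult_le_compat_l; [lra|apply psum_abs_diff]|].
      eapply Rle_trans; [apply vc_tail_bound|apply HB]. }
    pose proof (lim_dist_le _ _ k _ _ HL Hdist).
    rewrite Rabs_mult, Rabs_Ropp.
    replace (B * delta) with (Rabs (cprod a 0 k) * (delta * B / Rabs (cprod a 0 k)))
      by (field; lra).
    apply Rmult_le_compat_l; lra.
Qed.

Lemma bounded_solution : Rabs (cprod a 0 n) <> 1 ->
  exists d, (forall k, d (S k) = a k * d k + f k) /\
    (forall k, Rabs (d k)
               <= Rabs (cprod a 0 n) / Rabs (1 - Rabs (cprod a 0 n)) * M * delta).
Proof.
  intros Hr1. destruct (Rtotal_order (Rabs (cprod a 0 n)) 1) as [Hr|[Hr|Hr]].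
  - rewrite (Rabs_right (1 - _)) by lra. apply contracting_solution; auto.
  - contradiction.
  - rewrite (Rabs_left1 (1 - _)), Ropp_minus_distr by lra. apply expanding_solution; auto.
Qed.

End BoundedSolution.

Definition fo (h : R) (mu x : nat -> R) (k : nat) : R := Dh h x k - mu k * x k.

(* Hyers-Ulam stability of F_mu z = g for n-periodic mu: an approximate
   solution x is corrected by a bounded solution d of the error recurrence
   d(k+1) = (1 + h mu_k) d_k + h (F_mu x - g)_k. *)
Lemma fo_stable h n mu M eps g x :
  0 < h -> (0 < n)%nat -> (forall k, mu (k + n)%nat = mu k) ->
  (forall k, 1 + h * mu k <> 0) ->
  Rabs (cprod (fun k => 1 + h * mu k) 0 n) <> 1 ->
  (forall k, rsum (fun k => 1 + h * mu k) k n <= M) ->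
  (forall k, Rabs (fo h mu x k - g k) <= eps) ->
  exists z, (forall k, fo h mu z k = g k) /\
    (forall k, Rabs (x k - z k)
               <= h * Rabs (cprod (fun k => 1 + h * mu k) 0 n)
                  / Rabs (1 - Rabs (cprod (fun k => 1 + h * mu k) 0 n)) * M * eps).
Proof.
  intros Hh Hn Hper Hnz Hrho HM Hx.
  set (a := fun k => 1 + h * mu k) in *.
  assert (Hf : forall k, Rabs (h * (fo h mu x k - g k)) <= h * eps).
  { intros k. rewrite Rabs_mult, Rabs_right by lra.
    apply Rmult_le_compat_l; auto; lra. }
  destruct (bounded_solution a _ n M (h * eps) Hn Hnz
              ltac:(intros; unfold a; rewrite Hper; auto) HM Hf Hrho) as [d [Hd Hdb]].
  exists (fun k => x k - d k). split.
  - intros k. unfold fo, Dh in *. rewrite Hd. unfold a. field. lra.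
  - intros k. replace (x k - (x k - d k)) with (d k) by ring.
    eapply Rle_trans; [apply Hdb|]. right. unfold Rdiv. ring.
Qed.

Lemma cprod_dexp h mu m : dexp h mu m = cprod (fun k => 1 + h * mu k) 0 m.
Proof. induction m; simpl; auto. rewrite IHm. reflexivity. Qed.

Lemma periodic_mod (mu : nat -> R) n : (0 < n)%nat -> (forall k, mu (k + n)%nat = mu k) ->
  forall x, mu (x mod n) = mu x.
Proof.
  intros Hn Hper x.
  assert (Hq : forall q k, mu (k + q * n)%nat = mu k).
  { induction q; intros k; simpl; [rewrite Nat.add_0_r; auto|].
    replace (k + (n + q * n))%nat with (k + q * n + n)%nat by lia. rewrite Hper; auto. }
  rewrite (Nat.div_mod x n) at 2 by lia.
  replace (n * (x / n) + x mod n)%nat with (x mod n + (x / n) * n)%nat by lia.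
  rewrite Hq; auto.
Qed.

Lemma fold_plus_init l c : fold_right Rplus c l = fold_right Rplus 0 l + c.
Proof. induction l; simpl; lra. Qed.

Lemma fold_max_ge l x : In x l -> x <= fold_right Rmax 0 l.
Proof.
  induction l; simpl; [tauto|]. intros [->|H]; [apply Rmax_l|].
  eapply Rle_trans; [apply IHl; auto|apply Rmax_r].
Qed.

(* Each reciprocal sum over a period is one of the S_k(mu), hence at most
   their maximum. *)
Lemma rsum_le_Smax h n mu : (0 < n)%nat -> (forall k, mu (k + n)%nat = mu k) ->
  forall j, rsum (fun k => 1 + h * mu k) j n <= Smax h n mu.
Proof.
  intros Hn Hper j. set (a := fun k => 1 + h * mu k).
  assert (HS : forall i, Sprod h n mu (j mod n) i = / Rabs (cprod a j i)).
  { induction i; simpl; [rewrite Rabs_R1, Rinv_1; auto|].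
    rewrite IHi, Rabs_mult, Rinv_mult. unfold a.
    rewrite Nat.Div0.add_mod_idemp_l, periodic_mod; auto. }
  assert (HSk : forall m, fold_right Rplus 0 (map (Sprod h n mu (j mod n)) (seq 1 m))
                          = rsum a j m).
  { induction m; [reflexivity|].
    rewrite seq_S, map_app, fold_right_app, fold_plus_init, IHm.
    cbn [map fold_right]. rewrite HS, Rplus_0_r. reflexivity. }
  rewrite <- HSk. apply fold_max_ge, in_map_iff. exists (j mod n). split; [reflexivity|].
  apply in_seq. split; [lia|]. simpl. apply Nat.mod_upper_bound. lia.
Qed.

Lemma fo_stable_K0 h n mu s nu eps g x :
  0 < h -> (0 < n)%nat -> (forall k, mu (k + n)%nat = mu k) ->
  (forall k, 1 + h * mu k <> 0) -> Rabs (dexp h mu n) <> 1 ->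
  (forall k, nu k = mu (k + s)%nat) ->
  (forall k, Rabs (fo h nu x k - g k) <= eps) ->
  exists z, (forall k, fo h nu z k = g k) /\
    (forall k, Rabs (x k - z k) <= K0 h n mu * eps).
Proof.
  intros Hh Hn Hper Hnz Hrho Hnu Hx.
  assert (Enu : nu = fun k => mu (k + s)%nat) by (extensionality k; auto).
  subst nu; clear Hnu.
  set (a := fun k => 1 + h * mu k).
  assert (Ha : forall k, a k <> 0) by exact Hnz.
  assert (Hpera : forall k, a (k + n)%nat = a k) by (intros; unfold a; rewrite Hper; auto).
  assert (Hprod : cprod (fun k => a (k + s)%nat) 0 n = dexp h mu n).
  { rewrite cprod_dexp, cprod_shift. apply cprod_period; auto. }
  destruct (fo_stable h n (fun k => mu (k + s)%nat) (Smax h n mu) eps g x)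
    as [z [Hz Hzb]]; auto.
  - intros k. replace (k + n + s)%nat with (k + s + n)%nat by lia. auto.
  - change (Rabs (cprod (fun k => a (k + s)%nat) 0 n) <> 1). rewrite Hprod; auto.
  - intros k. change (rsum (fun j => a (j + s)%nat) k n <= Smax h n mu).
    rewrite rsum_shift. apply rsum_le_Smax; auto.
  - exists z. split; auto. intros k. change (fun k => 1 + h * mu (k + s)%nat)
      with (fun k => a (k + s)%nat) in Hzb. rewrite Hprod in Hzb. apply Hzb.
Qed.

Lemma factorization h (lam y : nat -> R) k : h <> 0 ->
  Dh h (Dh h (Dh h y)) k + lam (k + 2)%nat * Dh h (Dh h y) k
  + (Dh h lam (k + 1)%nat - lam (k + 1)%nat * lam (k + 2)%nat) * Dh h y k
  + (Dh h (Dh h lam) k - lam k * Dh h lam (k + 1)%nat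
     - lam k * lam (k + 1)%nat * lam (k + 2)%nat) * y k
  = fo h (fun j => - lam (j + 2)%nat)
       (fo h (fun j => lam (j + 1)%nat) (fo h (fun j => - lam j) y)) k.
Proof.
  intros Hh. unfold fo, Dh.
  replace (k + 2)%nat with (S (S k)) by lia.
  replace (k + 1)%nat with (S k) by lia.
  replace (S k + 1)%nat with (S (S k)) by lia.
  field. auto.
Qed.

Lemma one_plus_h_nz h l : 0 < h -> l <> 1 / h /\ l <> - (1 / h) ->
  1 + h * l <> 0 /\ 1 + h * - l <> 0.
Proof.
  intros Hh [H1 H2]. split; intros E.
  - apply H2. apply (Rmult_eq_reg_l h); [|lra]. field_simplify; lra.
  - apply H1. apply (Rmult_eq_reg_l h); [|lra]. field_simplify; lra.
Qed.

Lemma K0_pos h n mu : 0 < h -> (0 < n)%nat -> (forall k, mu (k + n)%nat = mu k) ->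
  (forall k, 1 + h * mu k <> 0) -> 0 < Rabs (dexp h mu n) -> Rabs (dexp h mu n) <> 1 ->
  0 < K0 h n mu.
Proof.
  intros Hh Hn Hper Hnz Hpos Hne. unfold K0.
  assert (HS : 0 < Smax h n mu).
  { eapply Rlt_le_trans; [|apply (rsum_le_Smax h n mu Hn Hper 0)].
    pose proof (rsum_mono _ Hnz 0 1 (n - 1)) as Hmono.
    replace (1 + (n - 1))%nat with n in Hmono by lia.
    eapply Rlt_le_trans; [|exact Hmono]. simpl. rewrite Rplus_0_l, Rmult_1_l. apply Rinv_0_lt_compat, Rabs_pos_lt, Hnz. }
  assert (0 < Rabs (1 - Rabs (dexp h mu n))) by (apply Rabs_pos_lt; lra).
  apply Rmult_lt_0_compat; auto. unfold Rdiv.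
  apply Rmult_lt_0_compat; [apply Rmult_lt_0_compat; auto|apply Rinv_0_lt_compat; auto].
Qed.

Theorem theorem5p4 (h : R) (n : nat) (lam : nat -> R) :
  0 < h ->
  ncycle n lam ->
  (forall k, lam k <> 1 / h /\ lam k <> - (1 / h)) ->
  0 < Rabs (dexp h lam n) -> Rabs (dexp h lam n) <> 1 ->
  0 < Rabs (dexp h (fun k => - lam k) n) ->
  Rabs (dexp h (fun k => - lam k) n) <> 1 ->
  let p := fun k => lam (k + 2)%nat in
  let q := fun k => Dh h lam (k + 1)%nat - lam (k + 1)%nat * lam (k + 2)%nat in
  let r := fun k => Dh h (Dh h lam) k - lam k * Dh h lam (k + 1)%nat
                    - lam k * lam (k + 1)%nat * lam (k + 2)%nat in
  HUS (fun y k => Dh h (Dh h (Dh h y)) k + p k * Dh h (Dh h y) k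
                  + q k * Dh h y k + r k * y k)
      (fun _ => 0)
      (K0 h n lam * (K0 h n (fun k => - lam k)) ^ 2).
Proof.
  intros Hh [Hn [Hper _]] Hl Hpos Hne Hpos' Hne' p q r.
  set (nlam := fun k => - lam k).
  assert (Hnz : forall k, 1 + h * lam k <> 0) by (intros; apply one_plus_h_nz; auto).
  assert (Hnz' : forall k, 1 + h * nlam k <> 0) by (intros; apply one_plus_h_nz; auto).
  assert (Hper' : forall k, nlam (k + n)%nat = nlam k) by (intros; unfold nlam; rewrite Hper; auto).
  pose proof (K0_pos h n lam Hh Hn Hper Hnz Hpos Hne) as HK.
  pose proof (K0_pos h n nlam Hh Hn Hper' Hnz' Hpos' Hne') as HK'.
  split; [apply Rmult_lt_0_compat; auto; apply pow_lt; auto|].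
  intros eps Heps xi Hxi.
  (* undo the three first-order factors, outermost first *)
  destruct (fo_stable_K0 h n nlam 2 (fun j => - lam (j + 2)%nat) eps (fun _ => 0)
              (fo h (fun j => lam (j + 1)%nat) (fo h (fun j => - lam j) xi)))
    as [w [Hw Hwb]]; auto.
  { intros k. rewrite <- factorization by lra. apply Hxi. }
  destruct (fo_stable_K0 h n lam 1 (fun j => lam (j + 1)%nat) (K0 h n nlam * eps) w
              (fo h (fun j => - lam j) xi)) as [v [Hv Hvb]]; auto.
  destruct (fo_stable_K0 h n nlam 0 (fun j => - lam j) (K0 h n lam * (K0 h n nlam * eps)) v xi)
    as [y [Hy Hyb]]; auto.
  { intros k. unfold nlam. rewrite Nat.add_0_r. reflexivity. }
  exists y. split.
  - intros k. cbv beta. unfold p, q, r. rewrite factorization by lra.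
    rewrite (functional_extensionality _ _ Hy), (functional_extensionality _ _ Hv). apply Hw.
  - intros k. eapply Rle_trans; [apply Hyb|]. right. ring.
Qed.
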